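(* Let $N\ge 1$ and let $X_1,\dots,X_N$ be the $N$ roots of the $N$-th Legendre polynomial, transformed to the interval $[0,1]$. For $i=1,\dots,N$ let $h_i(\xi)=\prod_{s\ne i}\frac{\xi-X_s}{X_i-X_s}$ be the Lagrange basis polynomials, so that $h_1,\dots,h_N$ form a basis of the space $\mathsf{P}_{N-1}$ of real polynomials of degree at most $N-1$. Let $m\ge 1$, let $s_1,\dots,s_m>0$ with $\sum_{k=1}^m s_k=1$, and set $o_k=\sum_{\alpha=1}^{k-1}s_\alpha$ (so $o_1=0$); thus the cell face parameter interval $[0,1]$ (coordinate $\xi$) is partitioned into the mortar intervals $[o_k,o_k+s_k]$, and on the $k$-th mortar the mortar coordinate $z\in[0,1]$ is related to $\xi$ by $\xi=o_k+s_k z$. Given any $\phi^{\Omega}\in\mathsf{P}_{N-1}$ (a function of $\xi$), define for each $k$ the polynomial $\phi^{\Xi_k}\in\mathsf{P}_{N-1}$ (a function of $z$) as the unique solution of $$\int_0^1\big(\phi^{\Xi_k}(z)-\phi^{\Omega}(o_k+s_kz)\big)h_j(z)\,dz=0\quad\text{for all }j=1,\dots,N,$$ and then define $\phi^{*\Omega}\in\mathsf{P}_{N-1}$ as the unique solution of $$\sum_{k=1}^m\int_{o_k}^{o_k+s_k}\Big(\phi^{*\Omega}(\xi)-\phi^{\Xi_k}\big(\tfrac{\xi-o_k}{s_k}\big)\Big)h_j(\xi)\,d\xi=0\quad\text{for all }j=1,\dots,N.$$ Then $\phi^{*\Omega}=\phi^{\Omega}$. Equivalently, writing $\mathbf{P}^{\Omega\to\Xi_k}$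 for the $N\times N$ matrix mapping the nodal values $(\phi^{\Omega}(X_1),\dots,\phi^{\Omega}(X_N))$ to $(\phi^{\Xi_k}(X_1),\dots,\phi^{\Xi_k}(X_N))$, and $\mathbf{P}^{\Xi_k\to\Omega}$ for the $N\times N$ matrix such that the nodal values of $\phi^{*\Omega}$ equal $\sum_{k=1}^m\mathbf{P}^{\Xi_k\to\Omega}$ applied to the nodal values of $\phi^{\Xi_k}$, one has $\sum_{k=1}^m\mathbf{P}^{\Xi_k\to\Omega}\mathbf{P}^{\Omega\to\Xi_k}=\mathbf{I}$ (the $N\times N$ identity matrix).
   Context: This is the ''outflow condition'' for projections between a cell face $\Omega$ on a nonconforming (sliding) interface and the mortar elements $\Xi_1,\dots,\Xi_m$ that subdivide it: projecting a polynomial from a cell face to its mortars and immediately projecting back reproduces the original polynomial. The matrices $\mathbf{P}^{\Xi_k\to\Omega}$ are well defined by linearity: the back-projection is linear in the tuple of mortar polynomials and decomposes as a sum of contributions from each mortar, with $\mathbf{P}^{\Xi_k\to\Omega}$ being the contribution of mortar $k$ (explicitly $\mathbf{P}^{\Xi_k\to\Omega}=s_k\mathbf{M}^{-1}\mathbf{S}_k^{\mathsf T}$ and $\mathbf{P}^{\Omega\to\Xi_k}=\mathbf{M}^{-1}\mathbf{S}_k$, where $M_{ji}=\int_0^1h_i(z)h_j(z)\,dz$ and $(\mathbf{S}_k)_{ji}=\int_0^1h_i(o_k+s_kz)h_j(z)\,dz$). *)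

From HB Require Import structures.
From mathcomp Require Import all_boot all_order all_algebra.
From mathcomp Require Import all_classical all_reals all_analysis.
Set Implicit Arguments. Unset Strict Implicit. Unset Printing Implicit Defensive.
Import Order.TTheory GRing.Theory Num.Theory.
Local Open Scope ring_scope.
Local Open Scope classical_set_scope.

Section Defs.
Variable R : realType.

Definition legendre (N : nat) : {poly R} :=
  ((2%:R ^+ N * (N`!)%:R)^-1) *: (derivn N (('X ^+ 2 - 1) ^+ N)).

Definition lagrange_basis (N : nat) (X : 'I_N -> R) (i : 'I_N) : {poly R} :=
  \prod_(s < N | s != i) ((X i - X s)^-1 *: ('X - (X s)%:P)).

Definition mortar_offset (m : nat) (s : 'I_m -> R) (k : 'I_m) : R :=
  \sum_(a < m | (a < k)%N) s a.

Definition int_ab (a b : R) (f : R -> R) : R :=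
  (\int[@lebesgue_measure R]_(x in `[a, b]) f x)%R.

End Defs.

From HB Require Import structures.
From mathcomp Require Import all_boot all_order all_algebra.
From mathcomp Require Import all_classical all_reals all_analysis.
From mathcomp Require Import zify lra.
Set Implicit Arguments. Unset Strict Implicit. Unset Printing Implicit Defensive.
Import Order.TTheory GRing.Theory Num.Theory numFieldNormedType.Exports.
Local Open Scope ring_scope.
Local Open Scope classical_set_scope.

(* Both projections are L^2-orthogonal projections onto P_(N-1): the first for
   the inner product of L^2(0,1) in the mortar coordinate z, the second for the
   broken inner product sum_k \int_(o_k)^(o_k + s_k).  Since phi(o_k + s_k z) is
   already in P_(N-1), the first projection returns it, and then phi itself
   solves the equations defining phi*.  Uniqueness in both steps is one fact: a
   polynomial of P_(N-1) orthogonal to every h_j is orthogonal to itself, as the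
   h_j span P_(N-1), so it vanishes: a nonzero polynomial does not vanish
   identically on any interval, so its square has positive integral. *)

Section Lagrange.
Variables (R : realType) (N : nat) (X : 'I_N -> R).
Hypothesis X_inj : injective X.

Lemma size_lagrange_basis j : (size (lagrange_basis X j) <= N)%N.
Proof.
have size_factor i : (size ((X j - X i)^-1 *: ('X - (X i)%:P)) <= 2)%N.
  by rewrite (leq_trans (size_scale_leq _ _)) ?size_XsubC.
apply: leq_trans (size_poly_prod_leq _ _) _.
apply: leq_trans (leq_sub2r _ (_ : _ <= (N.-1 * 2).+1)%N) _.
  rewrite ltnS (leq_trans (leq_sum _ (fun i _ => size_factor i))) //.
  by rewrite sum_nat_const cardC1 card_ord.
rewrite cardC1 card_ord; have := ltn_ord j; lia.
Qed.

Lemma horner_lagrange_basis i j : (lagrange_basis X j).[X i] = (i == j)%:R.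
Proof.
rewrite horner_prod; have [->|ij] := eqVneq i j.
  apply: big1 => k kj; rewrite hornerZ hornerXsubC mulVf // subr_eq0.
  by apply: contra kj => /eqP /X_inj ->.
by rewrite (bigD1 i) //= hornerZ hornerXsubC subrr mulr0 mul0r.
Qed.

Lemma lagrange_expansion (q : {poly R}) : (size q <= N)%N ->
  q = \sum_(j < N) q.[X j] *: lagrange_basis X j.
Proof.
move=> size_q; apply/subr0_eq/(roots_geq_poly_eq0 (rs := map X (enum 'I_N))).
- apply/allP => _ /mapP [i _ ->]; rewrite /root hornerD hornerN horner_sum.
  rewrite (bigD1 i) //= big1 => [|k ki]; last first.
    by rewrite hornerZ horner_lagrange_basis eq_sym (negbTE ki) mulr0.
  by rewrite hornerZ horner_lagrange_basis eqxx mulr1 addr0 subrr.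
- by rewrite map_inj_uniq ?enum_uniq.
rewrite size_map size_enum_ord (leq_trans (size_polyD _ _)) // geq_max size_q.
rewrite size_polyN (leq_trans (size_sum _ _ _)) //; apply/bigmax_leqP => j _.
by rewrite (leq_trans (size_scale_leq _ _)) ?size_lagrange_basis.
Qed.

Variable F : {poly R} -> R.
Hypothesis F_add : {morph F : p q / p + q}.
Hypothesis F_scale : forall c p, F (c *: p) = c * F p.
Hypothesis F_sqr_gt0 : forall p, p != 0 -> 0 < F (p * p).

Lemma lagrange_orthogonal_eq0 (d : {poly R}) : (size d <= N)%N ->
  (forall j, F (d * lagrange_basis X j) = 0) -> d = 0.
Proof.
move=> size_d d_orth.
have F0 : F 0 = 0 by rewrite -(scale0r 0) F_scale mul0r.
have F_dd : F (d * d) = 0.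
  rewrite {2}(lagrange_expansion size_d) mulr_sumr (big_morph F F_add F0).
  by rewrite big1 // => j _; rewrite -scalerAr F_scale d_orth mulr0.
by have [//|/F_sqr_gt0] := eqVneq d 0; rewrite F_dd ltxx.
Qed.

End Lagrange.

Lemma exists_nonroot_itv (R : realFieldType) (a b : R) (p : {poly R}) :
  a < b -> p != 0 -> exists2 c, a < c < b & ~~ root p c.
Proof.
move=> ab p_neq0; pose t (i : nat) := a + (b - a) / i.+2%:R.
have ba_gt0 : 0 < b - a by rewrite subr_gt0.
have t_inj : injective t.
  move=> i j /addrI /(mulfI (lt0r_neq0 ba_gt0)) /invr_inj /eqP.
  by rewrite eqr_nat !eqSS => /eqP.
have /allPn [_ /mapP [i _ ->]] : ~~ all (root p) (mkseq t (size p)).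
  apply: contra p_neq0 => all_roots; apply/eqP/(roots_geq_poly_eq0 all_roots).
    by rewrite map_inj_uniq ?iota_uniq.
  by rewrite size_mkseq.
exists (t i) => //.
have step_gt0 : 0 < (b - a) / i.+2%:R by rewrite divr_gt0 ?ltr0n.
have step_lt : (b - a) / i.+2%:R < b - a.
  by rewrite ltr_pdivrMr ?ltr0n // ltr_pMr // ltr1n.
by rewrite /t ltrDl step_gt0 -ltrBrDl step_lt.
Qed.

Section IntegralPositivity.
Variable R : realType.

Lemma continuous_integrable_itv (f : R -> R) (a b : R) : continuous f ->
  (@lebesgue_measure R).-integrable `[a, b] (EFin \o f).
Proof.
move=> f_cont; apply: continuous_compact_integrable.
  exact: segment_compact.
exact: continuous_subspaceT.
Qed.

Lemma int_ab_continuous_gt0 (f : R -> R) (a b c : R) : continuous f ->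
  (forall x, a <= x <= b -> 0 <= f x) -> a < c < b -> 0 < f c ->
  0 < int_ab a b f.
Proof.
move=> f_cont f_ge0 c_in fc_gt0.
have f_int u v := continuous_integrable_itv u v f_cont.
have fc_half : f c / 2 < f c by lra.
have c_in_ab : c \in `]a, b[%R by rewrite in_itv.
have near_c : \forall x \near c, f c / 2 < f x /\ x \in `]a, b[%R.
  near=> x; split; near: x; first exact: cvgr_gt (f_cont c) _ fc_half.
  exact: near_in_itvoo.
have [e /= e_gt0 ball_e] := (nbhs_ballP _ _).1 near_c.
pose d := e / 2.
have d_gt0 : 0 < d by rewrite divr_gt0.
have in_ball x : c - d <= x <= c + d -> f c / 2 < f x /\ x \in `]a, b[%R.
  move=> /andP[lex xle]; apply: ball_e; rewrite /ball /= ltr_norml; apply/andP.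
  by split; rewrite /d in lex xle *; lra.
have sub_ab : `[c - d, c + d] `<=` `[a, b].
  move=> x /=; rewrite !in_itv /= => /in_ball[_]; rewrite in_itv /=.
  by move=> /andP[ax xb]; rewrite !ltW.
have int_fin : (\int[lebesgue_measure]_(x in `[a, b]) (f x)%:E)%E \is a fin_num.
  exact: integrable_fin_num (f_int a b).
have int_sub : (\int[lebesgue_measure]_(x in `[(c - d)%R, (c + d)%R]) (f x)%:E
                <= \int[lebesgue_measure]_(x in `[a, b]) (f x)%:E)%E.
  by apply: ge0_subset_integral => //; exact: measurable_int (f_int a b).
have int_cst : ((f c / 2 * (2 * d))%:E
                <= \int[lebesgue_measure]_(x in `[(c - d)%R, (c + d)%R]) (f x)%:E)%E.
  have : (\int[lebesgue_measure]_(x in `[(c - d)%R, (c + d)%R]) (f c / 2)%:E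
          <= \int[lebesgue_measure]_(x in `[(c - d)%R, (c + d)%R]) (f x)%:E)%E.
    apply: ge0_le_integral => //.
    - by move=> x _; rewrite lee_fin ltW // divr_gt0.
    - exact: measurable_int (f_int _ _).
    - by move=> x /=; rewrite in_itv lee_fin => /in_ball[/ltW].
  have cd_lt : c - d < c + d by lra.
  rewrite integral_cst //= lebesgue_measure_itv /= lte_fin cd_lt -EFinD -EFinM.
  by rewrite (_ : c + d - (c - d) = 2 * d) //; lra.
rewrite /int_ab /Rintegral -lte_fin fineK //.
apply: lt_le_trans (le_trans int_cst int_sub).
by rewrite lte_fin !mulr_gt0 ?divr_gt0.
Unshelve. all: by end_near.
Qed.

End IntegralPositivity.

Section PolyIntegral.
Variable R : realType.
Implicit Types (a b c : R) (p q : {poly R}).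

Let horner_integrable a b p :
  (@lebesgue_measure R).-integrable `[a, b] (EFin \o horner p).
Proof. exact/continuous_integrable_itv/continuous_horner. Qed.

Lemma int_ab_hornerD a b p q :
  int_ab a b (horner (p + q)) = int_ab a b (horner p) + int_ab a b (horner q).
Proof.
rewrite /int_ab -RintegralD ?horner_integrable //.
by apply: eq_Rintegral => x _; rewrite hornerD.
Qed.

Lemma int_ab_hornerZ a b c p :
  int_ab a b (horner (c *: p)) = c * int_ab a b (horner p).
Proof.
rewrite /int_ab -RintegralZl ?horner_integrable //.
by apply: eq_Rintegral => x _; rewrite hornerZ.
Qed.

Lemma int_ab_horner_sqr_ge0 a b p : 0 <= int_ab a b (horner (p * p)).
Proof. by apply: Rintegral_ge0 => x _; rewrite hornerM -expr2 sqr_ge0. Qed.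

Lemma int_ab_horner_sqr_gt0 a b p :
  a < b -> p != 0 -> 0 < int_ab a b (horner (p * p)).
Proof.
move=> ab p_neq0; have [c c_in pc_neq0] := exists_nonroot_itv ab p_neq0.
apply: int_ab_continuous_gt0 c_in _.
- exact: continuous_horner.
- by move=> x _; rewrite hornerM -expr2 sqr_ge0.
- by rewrite hornerM -expr2 exprn_even_gt0.
Qed.

Section SumIntegral.
Variables (I : finType) (a b : I -> R).

Definition sum_int_ab p : R := \sum_i int_ab (a i) (b i) (horner p).

Lemma sum_int_abD : {morph sum_int_ab : p q / p + q}.
Proof.
move=> p q; rewrite /sum_int_ab -big_split.
by apply: eq_bigr => i _; apply: int_ab_hornerD.
Qed.

Lemma sum_int_abZ c p : sum_int_ab (c *: p) = c * sum_int_ab p.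
Proof.
by rewrite /sum_int_ab mulr_sumr; apply: eq_bigr => i _; apply: int_ab_hornerZ.
Qed.

Lemma sum_int_ab_sqr_gt0 i0 p : a i0 < b i0 -> p != 0 -> 0 < sum_int_ab (p * p).
Proof.
move=> ab0 p_neq0; rewrite /sum_int_ab (bigD1 i0) //=.
rewrite ltr_wpDr ?int_ab_horner_sqr_gt0 ?sumr_ge0 // => i _.
exact: int_ab_horner_sqr_ge0.
Qed.

End SumIntegral.
End PolyIntegral.

Theorem mainTheorem1 (R : realType) (N : nat) (X : 'I_N -> R)
    (m : nat) (s : 'I_m -> R)
    (phi : {poly R}) (phiXi : 'I_m -> {poly R}) (phistar : {poly R}) :
  (0 < N)%N ->
  injective X ->
  (forall i, root (legendre R N) (2 * X i - 1)) ->
  (0 < m)%N ->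
  (forall k, 0 < s k) ->
  \sum_(k < m) s k = 1 ->
  (size phi <= N)%N ->
  (forall k, (size (phiXi k) <= N)%N) ->
  (forall (k : 'I_m) (j : 'I_N),
     int_ab 0 1 (fun z => ((phiXi k).[z] - phi.[mortar_offset s k + s k * z])
                          * (lagrange_basis X j).[z]) = 0) ->
  (size phistar <= N)%N ->
  (forall j : 'I_N,
     \sum_(k < m)
       int_ab (mortar_offset s k) (mortar_offset s k + s k)
         (fun xi => (phistar.[xi] - (phiXi k).[(xi - mortar_offset s k) / s k])
                    * (lagrange_basis X j).[xi]) = 0) ->
  phistar = phi.
Proof.
move=> _ X_inj _ m_gt0 s_gt0 _ size_phi size_phiXi phiXi_orth.
move=> size_phistar phistar_orth.
pose o := mortar_offset s.
pose phi_k k := phi \Po ((s k)%:P * 'X + (o k)%:P).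
have size_phi_k k : (size (phi_k k) <= N)%N.
  rewrite size_comp_poly2 // size_MXaddC polyC_eq0 gt_eqF //=.
  by rewrite size_polyC gt_eqF.
have phiXiE k : phiXi k = phi_k k.
  apply/subr0_eq.
  apply: (lagrange_orthogonal_eq0 X_inj (F := fun p => int_ab 0 1 (horner p))).
  - exact: int_ab_hornerD.
  - exact: int_ab_hornerZ.
  - by move=> p; apply: int_ab_horner_sqr_gt0 ltr01.
  - by rewrite (leq_trans (size_polyD _ _)) // geq_max size_polyN size_phiXi size_phi_k.
  move=> j /=; rewrite -[RHS](phiXi_orth k j); congr (int_ab _ _ _).
  apply: boolp.funext => z; rewrite /phi_k.
  rewrite !(hornerM, hornerD, hornerN, horner_comp, hornerX, hornerC).
  by rewrite [_ + o k]addrC.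
apply/subr0_eq.
apply: (lagrange_orthogonal_eq0 X_inj (F := sum_int_ab o (fun k => o k + s k))).
- exact: sum_int_abD.
- exact: sum_int_abZ.
- by move=> p; apply: (sum_int_ab_sqr_gt0 (i0 := Ordinal m_gt0)); rewrite ltrDl.
- by rewrite (leq_trans (size_polyD _ _)) // geq_max size_polyN size_phistar.
move=> j; rewrite -[RHS](phistar_orth j); apply: eq_bigr => k _.
congr (int_ab _ _ _); apply: boolp.funext => xi; rewrite phiXiE /phi_k.
rewrite !(hornerM, hornerD, hornerN, horner_comp, hornerX, hornerC).
by rewrite [s k * _]mulrC divfK ?gt_eqF // subrK.
Qed.
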